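(* Let $G$ be a finite group such that the identity element is the only vertex of the power graph $\mathscr{G}(G)$ adjacent to all other vertices. Then $\mathscr{G}(G)$ is not overfull.
   Context: For a finite group $G$, the power graph $\mathscr{G}(G)$ is the simple graph with vertex set the elements of $G$, in which two distinct elements $a,b$ are adjacent if and only if one is a power of the other. For a finite simple graph $\Gamma$ on $n$ vertices with maximum vertex degree $\Delta(\Gamma)$, $\Gamma$ is called overfull if $|E(\Gamma)| / \lfloor n/2 \rfloor > \Delta(\Gamma)$. *)

From mathcomp Require Import all_boot all_fingroup.
Set Implicit Arguments. Unset Strict Implicit. Unset Printing Implicit Defensive.
Local Open Scope group_scope.

Definition pg_adj (gT : finGroupType) (a b : gT) : bool :=
  (a != b) && ((a \in <[b]>) || (b \in <[a]>)).

Definition pg_nbhd (gT : finGroupType) (G : {group gT}) (a : gT) : {set gT} :=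
  [set b in G | pg_adj a b].

Definition pg_deg (gT : finGroupType) (G : {group gT}) (a : gT) : nat :=
  #|pg_nbhd G a|.

Definition pg_maxdeg (gT : finGroupType) (G : {group gT}) : nat :=
  \max_(a in G) pg_deg G a.

Definition pg_edges (gT : finGroupType) (G : {group gT}) : {set {set gT}} :=
  [set e : {set gT} | [exists a in G, exists b in G, pg_adj a b && (e == [set a; b])]].

(* Overfull: |E| / floor(n/2) > Delta, written without division
   (equivalent when floor(n/2) > 0; for n = 1 it yields "not overfull"). *)
Definition pg_overfull (gT : finGroupType) (G : {group gT}) : bool :=
  pg_maxdeg G * (#|G| ./2) < #|pg_edges G|.

Definition pg_dominating (gT : finGroupType) (G : {group gT}) (a : gT) : bool :=
  [forall b in G, (b != a) ==> pg_adj a b].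

(* Handshake: twice the number of edges is at most the degree sum.  The identity
   is adjacent to every other element, so it has degree n - 1, which is thus the
   maximum degree; by hypothesis every other vertex misses some vertex besides
   itself, so has degree at most n - 2.  Hence 2|E| <= (n-1) + (n-1)(n-2) = (n-1)^2
   <= (n-1) * 2 floor(n/2). *)

From mathcomp Require Import all_boot all_fingroup.
From mathcomp Require Import zify.
Set Implicit Arguments. Unset Strict Implicit. Unset Printing Implicit Defensive.
Local Open Scope group_scope.

Lemma predn_le_double_half (n : nat) : n.-1 <= n./2.*2.
Proof. by have := odd_double_half n; case: (odd n) => /=; lia. Qed.

Section Handshake.
Variables (T : finType) (r : rel T) (A : {set T}).
Hypotheses (r_sym : symmetric r) (r_irr : irreflexive r).

Definition rel_edges : {set {set T}} :=
  [set e : {set T} | [exists a in A, exists b in A, r a b && (e == [set a; b])]].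

Definition rel_arcs : {set T * T} := [set p in setX A A | r p.1 p.2].

Lemma double_card_rel_edges_le_arcs : 2 * #|rel_edges| <= #|rel_arcs|.
Proof.
rewrite -[#|rel_arcs|]sum1_card.
rewrite (partition_big (fun p : T * T => [set p.1; p.2]) (mem rel_edges)) /=; last first.
  move=> [a b]; rewrite !inE /= => /andP [/andP [aA bA] rab].
  by apply/existsP; exists a; rewrite aA; apply/existsP; exists b; rewrite bA rab /=.
rewrite mulnC -sum_nat_const; apply: leq_sum => e.
rewrite inE => /existsP [a /andP [aA /existsP [b /andP [bA /andP [rab /eqP ->]]]]].
have ab : a != b by apply: contraTneq rab => ->; rewrite r_irr.
have sub_ab : [set (a, b); (b, a)] \subset
    [pred p | (p \in rel_arcs) && ([set p.1; p.2] == [set a; b])].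
  apply/subsetP => p; rewrite !inE => /orP [] /eqP -> /=.
    by rewrite aA bA rab eqxx.
  by rewrite bA aA r_sym rab setUC eqxx.
rewrite sum1_card; apply: leq_trans (subset_leq_card sub_ab).
by rewrite cards2 xpair_eqE (negPf ab).
Qed.

Lemma card_rel_arcs : #|rel_arcs| = \sum_(a in A) #|[set b in A | r a b]|.
Proof.
rewrite -[#|rel_arcs|]sum1_card (partition_big (fun p : T * T => p.1) (mem A)) /=; last first.
  by move=> [a b]; rewrite !inE /= => /andP [/andP [aA _] _].
apply: eq_bigr => a aA; have pair_a_inj : injective (pair a : T -> T * T) by move=> y z [].
rewrite sum1_card -(card_imset _ pair_a_inj).
apply: eq_card => -[x y]; rewrite [in LHS]unfold_in !inE /=.
apply/idP/imsetP => [/andP [/andP [/andP [xA yA] rxy] /eqP xa] | [z]].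
  by subst x; exists y; rewrite ?inE ?yA.
by rewrite inE => /andP [zA raz] [-> ->]; rewrite aA zA raz eqxx.
Qed.

Lemma double_card_rel_edges_le_sum_deg :
  2 * #|rel_edges| <= \sum_(a in A) #|[set b in A | r a b]|.
Proof. by rewrite -card_rel_arcs double_card_rel_edges_le_arcs. Qed.

End Handshake.

Section PowerGraph.
Variables (gT : finGroupType) (G : {group gT}).

Lemma pg_adjC (a b : gT) : pg_adj a b = pg_adj b a.
Proof. by rewrite /pg_adj eq_sym orbC. Qed.

Lemma pg_adj_irr : irreflexive (@pg_adj gT).
Proof. by move=> a; rewrite /pg_adj eqxx. Qed.

Lemma double_card_pg_edges : 2 * #|pg_edges G| <= \sum_(a in G) pg_deg G a.
Proof. exact: (double_card_rel_edges_le_sum_deg _ pg_adjC pg_adj_irr). Qed.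

Lemma pg_nbhd1 : pg_nbhd G 1 = G :\ 1.
Proof. by apply/setP => b; rewrite !inE /pg_adj group1 /= andbT andbC eq_sym. Qed.

Lemma pg_deg1 : pg_deg G 1 = #|G|.-1.
Proof. by rewrite /pg_deg pg_nbhd1 (cardsD1 1 G) group1. Qed.

Lemma pred_card_le_pg_maxdeg : #|G|.-1 <= pg_maxdeg G.
Proof. by rewrite -pg_deg1; apply: (leq_bigmax_cond _ (group1 G)). Qed.

Lemma pg_deg_le_nondominating (a : gT) :
  a \in G -> ~~ pg_dominating G a -> pg_deg G a <= #|G|.-2.
Proof.
move=> aG /forallPn [b]; rewrite !negb_imply => /and3P [bG ba nab].
have sub_nbhd : pg_nbhd G a \subset (G :\ a) :\ b.
  apply/subsetP => c; rewrite !inE => /andP [cG ac]; rewrite cG andbT.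
  apply/andP; split; first by apply: contraNneq nab => <-.
  by apply: contraTneq ac => ->; rewrite pg_adj_irr.
apply: leq_trans (subset_leq_card sub_nbhd) _.
by rewrite (cardsD1 a G) aG (cardsD1 b (G :\ a)) !inE bG ba.
Qed.

Lemma sum_pg_deg_le_sqr :
  (forall a, a \in G -> pg_dominating G a -> a = 1) ->
  \sum_(a in G) pg_deg G a <= #|G|.-1 ^ 2.
Proof.
move=> only1.
have nondom_sum : \sum_(a in G :\ 1) pg_deg G a <= #|G :\ 1| * #|G|.-2.
  rewrite -sum_nat_const; apply: leq_sum => a; rewrite !inE => /andP [a1 aG].
  apply: pg_deg_le_nondominating => //.
  by apply: contra a1 => /(only1 a aG) ->.
rewrite (big_setD1 1) ?group1 //= pg_deg1.
apply: leq_trans (leq_add (leqnn _) nondom_sum) _.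
rewrite (cardsD1 1 G) group1 -mulnn; case: #|G :\ 1| => [|m] /=; lia.
Qed.

End PowerGraph.

Theorem mainTheorem5 (gT : finGroupType) (G : {group gT}) :
  (forall a, a \in G -> pg_dominating G a -> a = 1%g) ->
  ~~ pg_overfull G.
Proof.
move=> only1; rewrite /pg_overfull -leqNgt -leq_double doubleMr -mul2n.
apply: leq_trans (double_card_pg_edges G) _.
apply: leq_trans (sum_pg_deg_le_sqr only1) _.
by rewrite -mulnn leq_mul ?pred_card_le_pg_maxdeg ?predn_le_double_half.
Qed.
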